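(* Let $p$ be a prime and $F$ an arbitrary field. Let $F'|F$ be a cyclic extension of degree dividing $p-1$ and let $L|F'$ be a cyclic extension of degree $p$. If $L|F$ is galoisian, then there exists a (solvable) degree-$p$ extension $E|F$ such that $L=EF'$; any two such extensions $E$ are conjugate over $F$; and every $F$-conjugate of $E$ is contained in $L$.
   Context: A degree-$p$ extension $E$ of a field $F$ is called solvable if it is separable and the Galois group of its Galois closure over $F$ is solvable. All extensions are taken inside a fixed separable algebraic closure of $F$. *)

From HB Require Import structures.
From mathcomp Require Import all_boot all_order all_algebra all_fingroup all_solvable all_field.
Set Implicit Arguments. Unset Strict Implicit. Unset Printing Implicit Defensive.
Import GRing.Theory.
Local Open Scope ring_scope.

(* Ambient field Omega : a splitting field (normal, finite extension) over a base
   field F0; all fields of the statement are subfields of Omega. *)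

Definition normal_closure (F0 : fieldType) (Omega : splittingFieldType F0)
    (F E : {subfield Omega}) : {subfield Omega} :=
  (<< F + \sum_(s in ('Gal(fullv / F))%g) (s @: E) >>)%AS.

Definition solvable_ext (F0 : fieldType) (Omega : splittingFieldType F0)
    (F E : {subfield Omega}) : bool :=
  separable F E && solvable ('Gal(normal_closure F E / F))%g.

(* Since [F':F] divides p - 1 it is prime to p = [L:F'], so Gal(L/F') is a normal
   Hall subgroup of Gal(L/F).  By Schur-Zassenhaus it has a complement, whose fixed
   field E has degree p over F and satisfies E F' = L.  Conversely, for every field E2
   of degree p over F inside L the group Gal(L/E2) is such a complement, and since
   Gal(L/F') is cyclic all complements are conjugate.  Gal(L/F) is metacyclic, hence
   solvable, and the normal closure of E lies in L, so E|F is solvable. *)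
From HB Require Import structures.
From mathcomp Require Import all_boot all_order all_algebra all_fingroup all_solvable all_field.
Import GRing.Theory.
Local Open Scope ring_scope.
Local Open Scope group_scope.

Lemma prime_coprime_dvdn_pred p m : prime p -> (m %| p.-1)%N -> coprime p m.
Proof.
move=> pr_p dvd_m; have p_gt0 := prime_gt0 pr_p.
have p1_gt0 : (0 < p.-1)%N by rewrite -ltnS prednK // prime_gt1.
rewrite prime_coprime // gtnNdvd //.
  by rewrite lt0n; apply: contraTneq dvd_m => ->; rewrite dvd0n -lt0n.
by rewrite (leq_ltn_trans (dvdn_leq p1_gt0 dvd_m)) // prednK.
Qed.

Section GaloisFacts.

Context {F0 : fieldType} {Omega : splittingFieldType F0}.
Implicit Types F K E L : {subfield Omega}.

Lemma dim_tower F K L :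
  (F <= K)%VS -> (K <= L)%VS -> \dim_F L = (\dim_F K * \dim_K L)%N.
Proof.
move=> sFK sKL; apply/eqP; rewrite -(eqn_pmul2r (adim_gt0 F)).
move: (dim_sup_field sKL) (dim_sup_field sFK) (dim_sup_field (subv_trans sFK sKL)).
set a := \dim_K L; set b := \dim_F K; set c := \dim_F L => dimL dimK <-.
by rewrite dimL dimK mulnCA mulnA.
Qed.

Lemma normalField_limg_sub F E L s :
  normalField F L -> (E <= L)%VS -> s \in 'Gal(fullv / F) -> (s @: E <= L)%VS.
Proof.
move=> /forall_inP nFL sEL Gs; apply: subv_trans (limgS s sEL) _.
have := nFL (gal_repr s); rewrite inE kAutfE -gal_kHom ?subvf // Gs.
by move=> /(_ isT)/eqP->.
Qed.

Lemma gal_lift_limg F L E x :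
  (F <= L)%VS -> (E <= L)%VS -> x \in 'Gal(L / F) ->
  exists2 s, s \in 'Gal(fullv / F) & (s @: E)%VS = (x @: E)%VS.
Proof.
move=> sFL sEL Gx; have sFLf : (F <= L <= fullv)%VS by rewrite sFL subvf.
have homx : kHom F L x by rewrite -gal_kHom.
have [s Gs Ds] := kHom_to_gal sFLf (normalFieldf F) homx.
by exists s => //; apply: eq_in_limg => a Ea; rewrite Ds ?(subvP sEL).
Qed.

Lemma galois_solvable_tower F K L :
  (F <= K <= L)%VS -> galois F L -> normalField F K ->
  solvable 'Gal(L / K) -> solvable 'Gal(K / F) -> solvable 'Gal(L / F).
Proof.
move=> sFKL galFL nFK solLK solKF.
rewrite (series_sol (normalField_normal sFKL nFK)) solLK.
by rewrite (isog_sol (normalField_isog galFL sFKL nFK)).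
Qed.

Lemma sub_normal_closure F E : (F <= normal_closure F E)%VS.
Proof. exact: subv_trans (addvSl _ _) (sub_agenv _). Qed.

Lemma normal_closure_sub F E L :
  (F <= L)%VS -> (E <= L)%VS -> normalField F L -> (normal_closure F E <= L)%VS.
Proof.
move=> sFL sEL nFL; rewrite -[L in (_ <= L)%VS]subfield_closed agenvS //.
rewrite subv_add sFL; apply/subv_sumP => s Gs.
exact: normalField_limg_sub nFL sEL Gs.
Qed.

Lemma normalField_normal_closure F E : normalField F (normal_closure F E).
Proof.
apply/forall_inP => x; rewrite inE kAutfE => homFx.
rewrite eqEdim limg_dim_eq ?(eqP (AEnd_lker0 _)) ?capv0 // leqnn andbT.
rewrite /normal_closure aimg_agen agenvS // limgD fixedSpace_limg; last first.
  by case/andP: homFx.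
apply: addvS => //; rewrite limg_sum; apply/subv_sumP => s Gs; rewrite -limg_comp.
have /kAut_to_gal[t Gt Dt] : kAut F fullv (x \o s)%VF.
  by rewrite kAutfE comp_kHom // -gal_kHom ?subvf.
by rewrite (eq_in_limg (fun a _ => Dt a (memvf a))) (sumv_sup t).
Qed.

Lemma solvable_ext_galois_sub F E L :
  galois F L -> (E <= L)%VS -> solvable 'Gal(L / F) -> solvable_ext F E.
Proof.
move=> galFL sEL solFL; have [sFL sepFL nFL] := and3P galFL.
rewrite /solvable_ext (separableSr sEL sepFL) /=.
have sFNL : (F <= normal_closure F E <= L)%VS.
  by rewrite sub_normal_closure normal_closure_sub.
rewrite -(isog_sol (normalField_isog galFL sFNL (normalField_normal_closure F E))).
exact: quotient_sol.
Qed.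

End GaloisFacts.

Arguments dim_tower {F0 Omega F K L}.
Arguments normalField_limg_sub {F0 Omega F E L s}.
Arguments gal_lift_limg {F0 Omega F L E x}.
Arguments galois_solvable_tower {F0 Omega F K L}.
Arguments solvable_ext_galois_sub {F0 Omega F E L}.

Section CoprimeComplement.

Context {F0 : fieldType} {Omega : splittingFieldType F0} {F K L : {subfield Omega}}.
Hypotheses (sFKL : (F <= K <= L)%VS) (galFL : galois F L) (nFK : normalField F K).
Hypothesis coKL : coprime (\dim_K L) (\dim_F K).

Let sFK : (F <= K)%VS. Proof. by case/andP: sFKL. Qed.
Let sKL : (K <= L)%VS. Proof. by case/andP: sFKL. Qed.
Let galKL : galois K L. Proof. exact: galoisS galFL. Qed.
Let nsKF : 'Gal(L / K) <| 'Gal(L / F). Proof. exact: normalField_normal. Qed.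
Let cardK : #|'Gal(L / K)| = \dim_K L. Proof. by rewrite galois_dim. Qed.
Let dimKL_gt0 : (0 < \dim_K L)%N. Proof. by rewrite -cardK cardG_gt0. Qed.

Lemma card_gal_complement_field {E : {subfield Omega}} :
  (F <= E <= L)%VS -> \dim_F E = \dim_K L -> #|'Gal(L / E)| = \dim_F K.
Proof.
move=> sFEL dimE; have [sFE sEL] := andP sFEL.
apply/eqP; rewrite -(galois_dim (galoisS sFEL galFL)).
rewrite -(eqn_pmul2l dimKL_gt0) -{1}dimE -dim_tower //.
by rewrite (dim_tower sFK sKL) mulnC.
Qed.

Lemma gal_complements {E : {subfield Omega}} :
  (F <= E <= L)%VS -> \dim_F E = \dim_K L ->
  'Gal(L / E)%G \in [complements to 'Gal(L / K) in 'Gal(L / F)].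
Proof.
move=> sFEL dimE; have [sFE _] := andP sFEL.
have cardE := card_gal_complement_field sFEL dimE.
have tiKE : 'Gal(L / K) :&: 'Gal(L / E) = 1 by rewrite coprime_TIg ?cardK ?cardE.
apply/complP; split=> //; apply/eqP; rewrite eqEcard mul_subG ?galS //=.
by rewrite TI_cardMg // cardK cardE -galois_dim // (dim_tower sFK sKL) mulnC.
Qed.

Lemma prodv_complement {E : {subfield Omega}} :
  (F <= E <= L)%VS -> \dim_F E = \dim_K L -> (E * K)%VS = L.
Proof.
move=> sFEL dimE; have [_ sEL] := andP sFEL.
have /complP[tiKE _] := gal_complements sFEL dimE.
pose M : {subfield Omega} := (E * K)%AS.
have sML : (M <= L)%VS by apply: prodv_sub.
have sKM : (K <= M)%VS by apply: field_subvMl.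
have galML : galois M L by apply: galoisS galFL; rewrite sML (subv_trans sFK sKM).
have trivM : 'Gal(L / M) \subset [1].
  by rewrite -tiKE subsetI !galS ?field_subvMr.
apply/eqP; rewrite eqEdim sML /= (dim_sup_field sML) galois_dim //.
by rewrite (trivgP trivM) cards1 mul1n.
Qed.

Lemma exists_complement_field :
  exists2 E : {subfield Omega}, (F <= E <= L)%VS & \dim_F E = \dim_K L.
Proof.
have cardG : #|'Gal(L / F)| = (\dim_F K * \dim_K L)%N.
  by rewrite -galois_dim // (dim_tower sFK sKL).
have hallK : Hall 'Gal(L / F) 'Gal(L / K).
  by rewrite /Hall normal_sub // -divgS ?normal_sub // cardG cardK mulnK.
have /splitsP[H /complP[tiKH defG]] := SchurZassenhaus_split hallK nsKF.
have sHG : H \subset 'Gal(L / F) by rewrite -defG mulG_subr.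
exists (fixedField_aspace H).
  by rewrite -galois_connection ?sHG ?(subv_trans sFK sKL) //; apply: capvSl.
rewrite dim_fixed_galois // -divgS // -defG TI_cardMg // mulnK // cardG_gt0.
Qed.

Lemma complement_fields_conj {E E2 : {subfield Omega}} :
  solvable 'Gal(L / K) ->
  (F <= E <= L)%VS -> \dim_F E = \dim_K L ->
  (F <= E2 <= L)%VS -> \dim_F E2 = \dim_K L ->
  exists2 x, x \in 'Gal(L / K) & (x @: E)%VS = E2.
Proof.
move=> solKL sFEL dimE sFE2L dimE2; have [sFE sEL] := andP sFEL.
have /complP[_ defG] := gal_complements sFEL dimE.
have cardE := card_gal_complement_field sFEL dimE.
have cardE2 := card_gal_complement_field sFE2L dimE2.
have nKE : 'Gal(L / E) \subset 'N('Gal(L / K)).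
  by rewrite (subset_trans _ (normal_norm nsKF)) // galS.
have coKE : coprime #|'Gal(L / K)| #|'Gal(L / E)| by rewrite cardK cardE.
have sE2KE : 'Gal(L / E2) \subset 'Gal(L / K) * 'Gal(L / E).
  by rewrite defG; case/andP: sFE2L => sFE2 _; apply: galS.
have [x Kx defE2] := SchurZassenhaus_trans_sol solKL nKE sE2KE coKE
  (etrans cardE2 (esym cardE)).
exists x => //.
have homFx : kHom F L x.
  by rewrite -gal_kHom ?(subsetP (galS L sFK)) // (subv_trans sFK sKL).
have xF : (x @: F)%VS = F by apply: fixedSpace_limg; case/andP: homFx.
pose xE : {subfield Omega} := (x @: E)%AS.
have sFxEL : (F <= xE <= L)%VS.
  by rewrite /= -{1}xF !limgS // -{2}(limg_gal x) limgS.
rewrite -[RHS](galois_fixedField (galoisS sFE2L galFL)) defE2 gal_conjg.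
exact/esym/(galois_fixedField (galoisS sFxEL galFL)).
Qed.

End CoprimeComplement.

Theorem lemma14 (p : nat) (F0 : fieldType) (Omega : splittingFieldType F0)
    (F F' L : {subfield Omega}) :
  prime p ->
  (F <= F')%VS -> (F' <= L)%VS ->
  (* F'|F cyclic of degree dividing p - 1 *)
  galois F F' -> cyclic 'Gal(F' / F) -> (\dim_F F' %| p.-1)%N ->
  (* L|F' cyclic of degree p *)
  galois F' L -> cyclic 'Gal(L / F') -> \dim_F' L = p ->
  (* L|F Galois *)
  galois F L ->
  exists2 E : {subfield Omega},
    [/\ (F <= E)%VS, \dim_F E = p, solvable_ext F E & (E * F')%VS = L] &
    (forall E2 : {subfield Omega},
        (F <= E2)%VS -> \dim_F E2 = p -> (E2 * F')%VS = L ->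
        exists2 s, s \in 'Gal(fullv / F) & (s @: E)%VS = E2)
    /\ (forall s, s \in 'Gal(fullv / F) -> (s @: E <= L)%VS).
Proof.
move=> pr_p sFF' sF'L galFF' cycFF' dvd_p1 galF'L cycF'L dimF'L galFL.
have sFF'L : (F <= F' <= L)%VS by rewrite sFF'.
have [_ _ nFF'] := and3P galFF'.
have [_ _ nFL] := and3P galFL.
have coF'L : coprime (\dim_F' L) (\dim_F F') by rewrite dimF'L prime_coprime_dvdn_pred.
have solF'L : solvable 'Gal(L / F') := abelian_sol (cyclic_abelian cycF'L).
have solFL : solvable 'Gal(L / F) := galois_solvable_tower sFF'L galFL nFF' solF'L
  (abelian_sol (cyclic_abelian cycFF')).
have [E sFEL dimE] := exists_complement_field sFF'L galFL nFF' coF'L.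
have [sFE sEL] := andP sFEL.
exists E.
  split; rewrite -?dimF'L //; first exact: solvable_ext_galois_sub galFL sEL solFL.
  exact: (prodv_complement sFF'L galFL coF'L sFEL dimE).
split=> [E2 sFE2 dimE2 defL | s Gs]; last exact: normalField_limg_sub nFL sEL Gs.
have sFE2L : (F <= E2 <= L)%VS by rewrite sFE2 -defL field_subvMr.
have [x F'x <-] := complement_fields_conj sFF'L galFL nFF' coF'L solF'L sFEL dimE
  sFE2L (etrans dimE2 (esym dimF'L)).
exact: gal_lift_limg (subv_trans sFF' sF'L) sEL (subsetP (galS L sFF') x F'x).
Qed.
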